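(* Let $(F,t)\in U$ with $t\neq0$ and suppose $Y=Y_{F,t}$ is smooth and contains no plane. Then $Y$ has no Eckardt point on $\hat C_1\cup\hat C_2$.
   Context: $U=U_0\times\mathbb{A}^1$, where $U_0$ is the space of cubic forms $F(x_0,\dots,x_3)$ such that the curve cut out by $F$ on the quadric $x_0x_3=x_1x_2$ in $\mathbb{P}^3$ is smooth, avoids $[0,0,0,1]$, and is tangent with multiplicity $2$ to the lines $x_0=x_1=0$ and $x_0=x_2=0$. $Y_{F,t}\subset\mathbb{P}^5$ is $x_4^3-F(x_0,\dots,x_3)+x_5(x_0x_3-x_1x_2)+t\,x_0x_5^2=0$. $C_i=(x_0=x_i=x_5=0)\cap(x_4^3=F)$ and $\hat C_i\subset Y$ is the cone over $C_i$ with vertex $p_0=[0,\dots,0,1]$. An Eckardt point of a smooth cubic fourfold $Y$ is a point $p\in Y$ such that $Y\cap T_pY$ is a cone with vertex $p$, where $T_pY$ is the projective tangent hyperplane at $p$. *)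

From HB Require Import structures.
From mathcomp Require Import all_boot all_algebra.
From mathcomp Require Import mpoly.
Set Implicit Arguments.
Unset Strict Implicit.
Unset Printing Implicit Defensive.
Import GRing.Theory.
Local Open Scope ring_scope.

(* Points of projective space P^(n-1) are represented by their homogeneous
   coordinate vectors x : 'I_n -> K; a projective point is a nonzero vector
   and every condition below is invariant under rescaling. *)

Section ProjectiveDefs.
Variable K : fieldType.

Definition nonzero_vec n (x : 'I_n -> K) : Prop := exists i, x i != 0.

Definition evec n (i : 'I_n) : 'I_n -> K := fun j => (j == i)%:R.

Definition lincomb n (a : K) (x : 'I_n -> K) (b : K) (y : 'I_n -> K) : 'I_n -> K :=
  fun j => a * x j + b * y j.

Definition smooth_hypersurface n (G : {mpoly K[n]}) : Prop :=
  forall x : 'I_n -> K, nonzero_vec x -> G.@[x] = 0 ->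
    exists i : 'I_n, (G^`M(i)).@[x] != 0.

Definition on_tangent_hyperplane n (G : {mpoly K[n]}) (p x : 'I_n -> K) : Prop :=
  \sum_(i < n) (G^`M(i)).@[p] * x i = 0.

Definition is_cone_with_vertex n (S : ('I_n -> K) -> Prop) (p : 'I_n -> K) : Prop :=
  forall x, S x -> forall a b : K, S (lincomb a p b x).

Definition eckardt_point n (G : {mpoly K[n]}) (p : 'I_n -> K) : Prop :=
  [/\ nonzero_vec p, G.@[p] = 0 &
      is_cone_with_vertex (fun x => G.@[x] = 0 /\ on_tangent_hyperplane G p x) p].

Definition contains_plane n (G : {mpoly K[n]}) : Prop :=
  exists u v w : 'I_n -> K,
    (forall a b c : K, (forall j, a * u j + b * v j + c * w j = 0) ->
        [/\ a = 0, b = 0 & c = 0]) /\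
    (forall a b c : K, G.@[fun j => a * u j + b * v j + c * w j] = 0).

Definition smooth_complete_intersection n (Q F : {mpoly K[n]}) : Prop :=
  forall x : 'I_n -> K, nonzero_vec x -> Q.@[x] = 0 -> F.@[x] = 0 ->
    forall a b : K, (forall i, a * (Q^`M(i)).@[x] + b * (F^`M(i)).@[x] = 0) ->
      a = 0 /\ b = 0.

Definition restrict_to_line n (F : {mpoly K[n]}) (q r : 'I_n -> K) : {poly K} :=
  mmap (fun c : K => c%:P) (fun i => (q i)%:P + (r i)%:P * 'X) F.

(* The curve V(F) ∩ S (S a surface containing the line L spanned by l1, l2)
   is tangent to L with multiplicity 2: there is a point q of L at which the
   intersection multiplicity (= the order of vanishing at q of F restricted
   to L) is exactly 2.  Here r is any second point of L, distinct from q. *)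
Definition tangent_mult2 n (F : {mpoly K[n]}) (l1 l2 : 'I_n -> K) : Prop :=
  exists a b c d : K, a * d - b * c != 0 /\
    let h := restrict_to_line F (lincomb a l1 b l2) (lincomb c l1 d l2) in
    h != 0 /\ mup 0 h = 2%N.

End ProjectiveDefs.

Section CubicFourfold.
Variable K : fieldType.

Definition X6 (k : nat) : {mpoly K[6]} := 'X_(inord k).
Definition X4 (k : nat) : {mpoly K[4]} := 'X_(inord k).
Definition e6 (k : nat) : 'I_6 -> K := @evec K _ (inord k).
Definition e4 (k : nat) : 'I_4 -> K := @evec K _ (inord k).

Definition quadricQ : {mpoly K[4]} := X4 0 * X4 3 - X4 1 * X4 2.

Definition in_U0 (F : {mpoly K[4]}) : Prop :=
  [/\ F \is 3.-homog,
      smooth_complete_intersection quadricQ F,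
      F.@[e4 3] != 0,
      tangent_mult2 F (e4 2) (e4 3)              (* line x0 = x1 = 0 *)
    & tangent_mult2 F (e4 1) (e4 3)].            (* line x0 = x2 = 0 *)

Definition F6 (F : {mpoly K[4]}) : {mpoly K[6]} :=
  F \mPo [tuple X6 0; X6 1; X6 2; X6 3].

Definition Yeq (F : {mpoly K[4]}) (t : K) : {mpoly K[6]} :=
  X6 4 ^+ 3 - F6 F + X6 5 * (X6 0 * X6 3 - X6 1 * X6 2)
  + t%:MP * (X6 0 * X6 5 ^+ 2).

Definition curveC (F : {mpoly K[4]}) (i : nat) (c : 'I_6 -> K) : Prop :=
  [/\ nonzero_vec c, c (inord 0) = 0, c (inord i) = 0, c (inord 5) = 0 &
      c (inord 4) ^+ 3 = F.@[fun j : 'I_4 => c (inord j)]].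

Definition coneC (F : {mpoly K[4]}) (i : nat) (x : 'I_6 -> K) : Prop :=
  nonzero_vec x /\
  exists (a b : K) (c : 'I_6 -> K), curveC F i c /\ x = lincomb a (e6 5) b c.

End CubicFourfold.

From HB Require Import structures.
From mathcomp Require Import all_boot all_algebra.
From mathcomp Require Import mpoly.
From mathcomp Require Import ring.
Set Implicit Arguments.
Unset Strict Implicit.
Unset Printing Implicit Defensive.
Import GRing.Theory.
Local Open Scope ring_scope.

(* Let j, k be 1, 2 in some order.  On the linear space x0 = xj = 0 the terms
   x5 (x0 x3 - x1 x2) and t x0 x5^2 vanish, so Y meets it in the cone, with
   vertex e5, over the plane cubic x4^3 = F(0, .., xk, x3); this space contains
   the cone over C_j.  The tangency hypothesis puts F(0, .., xk, x3) in the form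
   l m^2 for suitable coordinates (l, m) of the line x0 = xj = 0 of P^3, so the
   plane cubic is the cuspidal cubic n^3 = l m^2.
   If p is an Eckardt point then, for every x on Y and on T_pY, the cubic
   s |-> Y(p + s x) has no s^2 term.  For every p in the cone we exhibit an x
   for which it has one: the third point where the tangent line at p meets the
   cuspidal cubic when x4(p) <> 0, any point of the cubic when p lies over the
   cusp, and a point with xj = 1 when p lies over the flex or is the vertex.
   Only the homogeneity of F, F(e3) <> 0 and the tangency are used. *)

Section LineRestriction.
Variable K : fieldType.
Hypothesis charK : [pchar K] =i pred0.

Lemma natr_inj : injective (fun m : nat => m%:R : K).
Proof.
have natr0 := (pcharf0P K).1 charK.
suff le_natr m l : (l <= m)%N -> m%:R = l%:R :> K -> m = l.
  by move=> m l eq_ml; case: (leqP l m) => [|/ltnW] le; [|apply/esym]; apply: le_natr.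
move=> le_lm /eqP; rewrite -subr_eq0 -natrB // natr0 subn_eq0 => le_ml.
by apply/eqP; rewrite eqn_leq le_ml.
Qed.

Lemma poly_eq_on_nonzero (P Q : {poly K}) :
  (forall s, s != 0 -> P.[s] = Q.[s]) -> P = Q.
Proof.
move=> PQ; apply/eqP; rewrite -subr_eq0; apply/eqP.
pose rs := [seq m.+1%:R : K | m <- iota 0 (size (P - Q))].
apply: (@roots_geq_poly_eq0 _ _ rs); last by rewrite size_map size_iota.
- apply/allP => _ /mapP [m _ ->].
  by rewrite /root hornerD hornerN PQ ?subrr // ((pcharf0P K).1 charK).
- by rewrite map_inj_uniq ?iota_uniq // => m l /natr_inj [].
Qed.

Variable n : nat.
Implicit Types (G : {mpoly K[n]}) (q r : 'I_n -> K).

Lemma horner_restrict_to_line G q r s :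
  (restrict_to_line G q r).[s] = G.@[fun i => q i + r i * s].
Proof.
rewrite /restrict_to_line /meval /mmap horner_sum; apply: eq_bigr => m _.
rewrite hornerM hornerC /mmap1 horner_prod; congr (_ * _); apply: eq_bigr => i _.
by rewrite horner_exp !hornerE.
Qed.

Lemma eq_restrict_to_line G q q' r r' : q =1 q' -> r =1 r' ->
  restrict_to_line G q r = restrict_to_line G q' r'.
Proof.
move=> eq_q eq_r; apply: poly_eq_on_nonzero => s _.
by rewrite !horner_restrict_to_line; apply: meval_eq => i; rewrite eq_q eq_r.
Qed.

Lemma coef0_restrict_to_line G q r : (restrict_to_line G q r)`_0 = G.@[q].
Proof.
by rewrite -horner_coef0 horner_restrict_to_line; apply: meval_eq => i; rewrite mulr0 addr0.
Qed.

Lemma restrict_to_lineD G1 G2 q r :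
  restrict_to_line (G1 + G2) q r = restrict_to_line G1 q r + restrict_to_line G2 q r.
Proof. exact: rmorphD. Qed.

Lemma restrict_to_lineM G1 G2 q r :
  restrict_to_line (G1 * G2) q r = restrict_to_line G1 q r * restrict_to_line G2 q r.
Proof. exact: rmorphM. Qed.

Lemma restrict_to_lineC c q r : restrict_to_line c%:MP q r = c%:P.
Proof. exact: mmapC. Qed.

Lemma restrict_to_lineX i q r : restrict_to_line 'X_i q r = (q i)%:P + (r i)%:P * 'X.
Proof. by rewrite /restrict_to_line mmapX mmap1U. Qed.

Lemma coef1_restrict_to_line G q r :
  (restrict_to_line G q r)`_1 = \sum_(i < n) (G^`M(i)).@[q] * r i.
Proof.
pose P G := (restrict_to_line G q r)`_1 = \sum_(i < n) (G^`M(i)).@[q] * r i.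
have PD G1 G2 : P G1 -> P G2 -> P (G1 + G2).
  rewrite /P restrict_to_lineD coefD => -> ->; rewrite -big_split /=.
  by apply: eq_bigr => i _; rewrite mderivD mevalD mulrDl.
have PM G1 G2 : P G1 -> P G2 -> P (G1 * G2).
  rewrite /P restrict_to_lineM coefM !big_ord_recr big_ord0 /= add0r.
  rewrite !coef0_restrict_to_line => -> ->.
  rewrite mulr_sumr mulr_suml -big_split /=; apply: eq_bigr => i _.
  by rewrite mderivM mevalD !mevalM; ring.
have PC c : P c%:MP.
  by rewrite /P restrict_to_lineC coefC big1 // => i _; rewrite mderivC meval0 mul0r.
have PX i : P 'X_i.
  rewrite /P restrict_to_lineX coefD coefC coefCM coefX add0r mulr1.
  rewrite (bigD1 i) //= big1 => [|l ne_li].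
    rewrite mderivX mevalZ mevalX mnm1E eqxx mul1r big1 ?mul1r ?addr0 // => l _.
    by rewrite mnmBE subnn expr0.
  by rewrite mderivX mevalZ mnm1E eq_sym (negbTE ne_li) !mul0r.
elim/mpolyind: G => [|c m G _ _ IH]; first by rewrite -mpolyC0; apply: PC.
apply: (PD _ _ _ IH); rewrite -mul_mpolyC; apply: (PM _ _ (PC c)).
rewrite mpolyXE_id; apply: (big_ind P _ PM) => [|i _]; first by rewrite -mpolyC1; apply: PC.
elim: (m i) => [|e IHe]; first by rewrite expr0 -mpolyC1; apply: PC.
by rewrite exprS; apply: (PM).
Qed.

Lemma size_restrict_to_line d G q r : G \is d.-homog ->
  (size (restrict_to_line G q r) <= d.+1)%N.
Proof.
move/dhomogP => homG; rewrite /restrict_to_line /mmap.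
apply: (leq_trans (size_sum _ _ _)); apply/bigmax_leqP_seq => m /homG degm _.
have -> : d = (\sum_i m i)%N by rewrite -degm; exact: mdegE.
rewrite mul_polyC (leq_trans (size_scale_leq _ _)) // /mmap1.
elim/big_rec2: _ => [|i p e _ IH]; first by rewrite size_poly1.
have size_line : (size ((q i)%:P + (r i)%:P * 'X)%R <= 2)%N.
  rewrite (leq_trans (size_polyD _ _)) // geq_max (leq_trans (size_polyC_leq1 _)) //=.
  by rewrite (leq_trans (size_polyMleq _ _)) // size_polyX addn2 ltnS size_polyC_leq1.
rewrite (leq_trans (size_polyMleq _ _)) // -subn1 leq_subLR add1n -addnS -addSn.
rewrite leq_add // (leq_trans (size_poly_exp_leq _ _)) // ltnS.
by case: (size _) size_line => [|[|[|//]]] _; rewrite ?mul0n ?mul1n.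
Qed.

Lemma meval_homogZ d G c v : G \is d.-homog ->
  G.@[fun i => c * v i] = c ^+ d * G.@[v].
Proof.
move/dhomogP => homG; rewrite /meval /mmap big_distrr /= !big_seq.
apply: eq_bigr => m /homG degm; rewrite /mmap1 mulrCA; congr (_ * _).
rewrite (eq_bigr (fun i => c ^+ m i * v i ^+ m i)) => [|i _]; last by rewrite exprMn.
by rewrite big_split /= prodrXr -degm; congr (_ ^+ _ * _); exact/esym/mdegE.
Qed.

Lemma meval_lincomb_homog d G q r a b : G \is d.-homog ->
  G.@[lincomb a q b r] =
  \sum_(i < d.+1) a ^+ (d - i) * b ^+ i * (restrict_to_line G q r)`_i.
Proof.
move=> homG; set h := restrict_to_line G q r.
have expand a' : a' != 0 -> G.@[lincomb a' q b r] =
    \sum_(i < d.+1) a' ^+ (d - i) * b ^+ i * h`_i.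
  move=> nz_a'; have -> : G.@[lincomb a' q b r] = G.@[fun i => a' * (q i + r i * (b / a'))].
    by apply: meval_eq => i; rewrite /lincomb; field.
  rewrite (meval_homogZ _ _ homG) -horner_restrict_to_line.
  rewrite (horner_coef_wide _ (size_restrict_to_line _ _ homG)) mulr_sumr.
  apply: eq_bigr => i _; rewrite -{1}(subnK (ltnSE (ltn_ord i))) exprD expr_div_n.
  by field; rewrite expf_neq0.
have [->|/expand //] := eqVneq a 0.
pose P := \sum_(i < d.+1) (b ^+ i * h`_i) *: 'X^(d - i).
have /(congr1 (horner^~ 0)) : restrict_to_line G (fun i => b * r i) q = P.
  apply: poly_eq_on_nonzero => s nz_s; rewrite horner_restrict_to_line horner_sum.
  have -> : G.@[fun i => b * r i + q i * s] = G.@[lincomb s q b r].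
    by apply: meval_eq => i; rewrite /lincomb; ring.
  by rewrite expand //; apply: eq_bigr => i _; rewrite hornerZ hornerXn; ring.
rewrite horner_restrict_to_line horner_sum => eq0.
have -> : G.@[lincomb 0 q b r] = G.@[fun i => b * r i + q i * 0].
  by apply: meval_eq => i; rewrite /lincomb; ring.
by rewrite eq0; apply: eq_bigr => i _; rewrite hornerZ hornerXn; ring.
Qed.

Lemma coef_restrict_to_line_homog d G q r : G \is d.-homog ->
  (restrict_to_line G q r)`_d = G.@[r].
Proof.
move=> homG; have <- : G.@[lincomb 0 q 1 r] = G.@[r].
  by apply: meval_eq => i; rewrite /lincomb; ring.
rewrite (meval_lincomb_homog _ _ _ _ homG) big_ord_recr /= big1 => [|i _].
  by rewrite subnn expr0 expr1n !mul1r add0r.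
by rewrite expr0n subn_eq0 leqNgt ltn_ord !mul0r.
Qed.

Lemma coef1_restrict_to_line_lincomb G q r1 r2 a b :
  (restrict_to_line G q (lincomb a r1 b r2))`_1 =
  a * (restrict_to_line G q r1)`_1 + b * (restrict_to_line G q r2)`_1.
Proof.
rewrite !coef1_restrict_to_line !mulr_sumr -big_split /=.
by apply: eq_bigr => i _; rewrite /lincomb; ring.
Qed.

Lemma eq_eckardt_point G p p' : p =1 p' -> eckardt_point G p -> eckardt_point G p'.
Proof.
move=> eq_p [[i nz_pi] Gp cone].
have eq_tangent y y' : y =1 y' ->
    on_tangent_hyperplane G p y = on_tangent_hyperplane G p' y'.
  move=> eq_y; rewrite /on_tangent_hyperplane; congr (_ = 0).
  by apply: eq_bigr => l _; rewrite (meval_eq _ eq_p) eq_y.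
have eq_line a b x : lincomb a p b x =1 lincomb a p' b x.
  by move=> l; rewrite /lincomb eq_p.
split.
- by exists i; rewrite -eq_p.
- by rewrite -(meval_eq _ eq_p).
- move=> x; rewrite -(eq_tangent x x) // => -[Gx tx] a b.
  have [Gab tab] := cone x (conj Gx tx) a b.
  by split; [rewrite -(meval_eq _ (eq_line a b x)) | rewrite -(eq_tangent _ _ (eq_line a b x))].
Qed.

Lemma eckardt_line_coef G p x (c0 c1 c2 c3 : K) :
  eckardt_point G p -> G.@[x] = 0 ->
  (forall s, G.@[fun i => p i + x i * s] = c0 + c1 * s + c2 * s ^+ 2 + c3 * s ^+ 3) ->
  c1 = 0 -> c2 + c3 = 0.
Proof.
move=> [_ Gp cone] Gx line c1_0.
have coefs : restrict_to_line G p x = \poly_(i < 4) [:: c0; c1; c2; c3]`_i.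
  apply: poly_eq_on_nonzero => s _.
  by rewrite horner_restrict_to_line line horner_poly !big_ord_recr big_ord0 /=; ring.
have c0_0 : c0 = 0 by rewrite -Gp -(coef0_restrict_to_line G p x) coefs coef_poly.
have tangent : on_tangent_hyperplane G p x.
  by rewrite /on_tangent_hyperplane -coef1_restrict_to_line coefs coef_poly.
have [+ _] := cone x (conj Gx tangent) 1 1.
have -> : G.@[lincomb 1 p 1 x] = G.@[fun i => p i + x i * 1].
  by apply: meval_eq => i; rewrite /lincomb; ring.
by rewrite line c0_0 c1_0 => line1; rewrite -[RHS]line1; ring.
Qed.

Lemma coef_mup0 (h : {poly K}) : h != 0 ->
  (forall i, (i < mup 0 h)%N -> h`_i = 0) /\ h`_(mup 0 h) != 0.
Proof.
move=> nz_h; set m := mup 0 h.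
have /dvdpP [g Eh] : 'X^m %| h by rewrite -(subr0 'X) -polyC0 -mup_geq.
split=> [i lt_im|]; first by rewrite Eh coefMXn lt_im.
rewrite Eh coefMXn ltnn subnn; apply/negP => /eqP g0.
have : ('X - 0%:P) ^+ m.+1 %| h.
  rewrite Eh exprS dvdp_mul ?dvdp_XsubCl ?polyC0 ?subr0 //.
  by rewrite /root horner_coef0 g0.
by rewrite -mup_geq // ltnn.
Qed.

Lemma tangent_mult2_normal_form F (l1 l2 : 'I_n -> K) :
  F \is 3.-homog -> tangent_mult2 F l1 l2 ->
  exists a b c d : K, a * d - b * c != 0 /\
    forall l m, F.@[lincomb l (lincomb a l1 b l2) m (lincomb c l1 d l2)] = l * m ^+ 2.
Proof.
move=> homF [a [b [c [d [det [nz_h mup_h]]]]]].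
set h := restrict_to_line _ _ _ in nz_h mup_h.
have [h_lt nz_h2] := coef_mup0 nz_h; rewrite mup_h in h_lt nz_h2.
set al := h`_2 in nz_h2; set bt := h`_3.
exists (a / al), (b / al), (c - bt / al * a), (d - bt / al * b); split.
  have -> : a / al * (d - bt / al * b) - b / al * (c - bt / al * a) = (a * d - b * c) / al.
    by field.
  by rewrite mulf_neq0 ?invr_eq0.
move=> l m; have -> : F.@[lincomb l (lincomb (a / al) l1 (b / al) l2) m
    (lincomb (c - bt / al * a) l1 (d - bt / al * b) l2)] =
    F.@[lincomb (l / al - m * bt / al) (lincomb a l1 b l2) m (lincomb c l1 d l2)].
  by apply: meval_eq => i; rewrite /lincomb; field.
rewrite (meval_lincomb_homog _ _ _ _ homF) -/h !big_ord_recr big_ord0 /=.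
by rewrite (h_lt 0%N) // (h_lt 1%N) // -/al -/bt; field.
Qed.
End LineRestriction.

Section CubicFourfold.
Variables (K : closedFieldType) (F : {mpoly K[4]}) (t : K) (j k : nat).
Hypothesis jk : (j = 1 /\ k = 2)%N \/ (j = 2 /\ k = 1)%N.
Hypothesis charK : [pchar K] =i pred0.

Definition vec4 (u0 uj uk u3 : K) : 'I_4 -> K := fun i =>
  if (i : nat) == 0%N then u0 else if (i : nat) == j then uj else if (i : nat) == k then uk else u3.

Definition pt6 (u0 uj uk u3 x4 x5 : K) : 'I_6 -> K := fun i =>
  if (i : nat) == 0%N then u0 else if (i : nat) == j then uj else if (i : nat) == k then uk
  else if (i : nat) == 3%N then u3 else if (i : nat) == 4%N then x4 else x5.

Lemma Yeq_pt6 u0 uj uk u3 x4 x5 :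
  (Yeq F t).@[pt6 u0 uj uk u3 x4 x5] =
  x4 ^+ 3 - F.@[vec4 u0 uj uk u3] + x5 * (u0 * u3 - uj * uk) + t * (u0 * x5 ^+ 2).
Proof.
rewrite /Yeq /F6 !(mevalD, mevalN, mevalM, rmorphXn, mevalC, mevalXU) comp_mpoly_meval /X6.
have -> : F.@[fun i => (tnth [tuple 'X_(inord 0); 'X_(inord 1); 'X_(inord 2); 'X_(inord 3)] i)
    .@[pt6 u0 uj uk u3 x4 x5]] = F.@[vec4 u0 uj uk u3].
  apply: meval_eq => -[[|[|[|[|//]]]] lt_i4]; rewrite /= mevalXU /pt6 /vec4 inordK //=;
  by case: jk => [[-> ->]|[-> ->]].
by rewrite /pt6 !inordK //; case: jk => [[-> ->]|[-> ->]] /=; ring.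
Qed.

Lemma pt6_eta (p : 'I_6 -> K) : p (inord 0) = 0 -> p (inord j) = 0 ->
  p =1 pt6 0 0 (p (inord k)) (p (inord 3)) (p (inord 4)) (p (inord 5)).
Proof.
move=> p0 pj i; rewrite -[i]inord_val /pt6 inordK //.
by case: jk => [[ej ek]|[ej ek]]; rewrite ej ek in pj *; case: i => [[|[|[|[|[|[|//]]]]]] ?].
Qed.

Lemma e4_3 : e4 K 3 =1 vec4 0 0 0 1.
Proof.
move=> i; rewrite -[i]inord_val /e4 /evec /vec4 -val_eqE /= !inordK //.
by case: jk => [[-> ->]|[-> ->]]; case: i => [[|[|[|[|//]]]] ?].
Qed.

Lemma e4_k : e4 K k =1 vec4 0 0 1 0.
Proof.
move=> i; rewrite -[i]inord_val /e4 /evec /vec4 -val_eqE /=.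
by case: jk => [[-> ->]|[-> ->]]; rewrite !inordK //; case: i => [[|[|[|[|//]]]] ?].
Qed.

Lemma vec4_lincomb a b u0 uj uk u3 v0 vj vk v3 :
  lincomb a (vec4 u0 uj uk u3) b (vec4 v0 vj vk v3) =1
  vec4 (a * u0 + b * v0) (a * uj + b * vj) (a * uk + b * vk) (a * u3 + b * v3).
Proof. by move=> i; rewrite /lincomb /vec4; do !case: ifP. Qed.

Lemma vec4_line s u0 uj uk u3 v0 vj vk v3 :
  (fun i => vec4 u0 uj uk u3 i + vec4 v0 vj vk v3 i * s) =1
  vec4 (u0 + v0 * s) (uj + vj * s) (uk + vk * s) (u3 + v3 * s).
Proof. by move=> i; rewrite /vec4; do !case: ifP. Qed.

Lemma pt6_line s u0 uj uk u3 x4 x5 v0 vj vk v3 y4 y5 :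
  (fun i => pt6 u0 uj uk u3 x4 x5 i + pt6 v0 vj vk v3 y4 y5 i * s) =1
  pt6 (u0 + v0 * s) (uj + vj * s) (uk + vk * s) (u3 + v3 * s) (x4 + y4 * s) (x5 + y5 * s).
Proof. by move=> i; rewrite /pt6; do !case: ifP. Qed.

Lemma tangent_line_coords : F \is 3.-homog -> tangent_mult2 F (e4 K k) (e4 K 3) ->
  exists a b c d : K, a * d - b * c != 0 /\
    forall l m, F.@[vec4 0 0 (l * a + m * c) (l * b + m * d)] = l * m ^+ 2.
Proof.
move=> homF /(tangent_mult2_normal_form charK homF) [a [b [c [d [det Fl]]]]].
exists a, b, c, d; split=> // l m; rewrite -Fl; apply: meval_eq => i.
by rewrite /lincomb e4_k e4_3 /vec4; do !case: ifP => _; ring.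
Qed.

Section PlaneCoordinates.
Hypothesis homF : F \is 3.-homog.
Hypothesis F_e3 : F.@[vec4 0 0 0 1] != 0.
Variables a b c d : K.
Hypothesis det : a * d - b * c != 0.
Hypothesis Fline : forall l m, F.@[vec4 0 0 (l * a + m * c) (l * b + m * d)] = l * m ^+ 2.

Local Notation Y := (Yeq F t).

Definition plane_pt (l m n r : K) : 'I_6 -> K := pt6 0 0 (l * a + m * c) (l * b + m * d) n r.

Lemma Yeq_plane_pt l m n r : Y.@[plane_pt l m n r] = n ^+ 3 - l * m ^+ 2.
Proof. by rewrite Yeq_pt6 Fline; ring. Qed.

Lemma plane_pt_line s l m n r l' m' n' r' :
  (fun i => plane_pt l m n r i + plane_pt l' m' n' r' i * s) =1
  plane_pt (l + l' * s) (m + m' * s) (n + n' * s) (r + r' * s).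
Proof. by move=> i; rewrite pt6_line /plane_pt; congr (pt6 _ _ _ _ _ _ _); ring. Qed.

Lemma plane_pt_coords p : p (inord 0) = 0 -> p (inord j) = 0 ->
  exists l m n r, p =1 plane_pt l m n r.
Proof.
move=> p0 pj; set pk := p (inord k); set p3 := p (inord 3).
exists ((d * pk - c * p3) / (a * d - b * c)), ((a * p3 - b * pk) / (a * d - b * c)).
exists (p (inord 4)), (p (inord 5)) => i.
by rewrite (pt6_eta p0 pj) /plane_pt -/pk -/p3; congr (pt6 _ _ _ _ _ _ _); field.
Qed.

Lemma eckardt_plane_polar l m n r l' m' n' : eckardt_point Y (plane_pt l m n r) ->
  n' ^+ 3 = l' * m' ^+ 2 -> 3 * n ^+ 2 * n' = l' * m ^+ 2 + 2 * l * m * m' ->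
  3 * n * n' ^+ 2 = 2 * l' * m * m' + l * m' ^+ 2.
Proof.
move=> hE on_x tangent.
suff : 3 * n * n' ^+ 2 - (2 * l' * m * m' + l * m' ^+ 2) + (n' ^+ 3 - l' * m' ^+ 2) = 0.
  by rewrite on_x subrr addr0 => /eqP; rewrite subr_eq0 => /eqP.
apply: (@eckardt_line_coef _ charK _ _ _ (plane_pt l' m' n' 0) (n ^+ 3 - l * m ^+ 2)
  (3 * n ^+ 2 * n' - (l' * m ^+ 2 + 2 * l * m * m')) _ _ hE) => [|s|].
- by rewrite Yeq_plane_pt on_x subrr.
- by rewrite (meval_eq _ (plane_pt_line _ _ _ _ _ _ _ _ _)) Yeq_plane_pt; ring.
- by rewrite tangent subrr.
Qed.

Lemma eckardt_plane_on_Y l m n r : eckardt_point Y (plane_pt l m n r) -> n ^+ 3 = l * m ^+ 2.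
Proof. by case=> _ + _; rewrite Yeq_plane_pt => /eqP; rewrite subr_eq0 => /eqP. Qed.

(* The point (-8 l, m, -2 n) is the image of (l, m, n) under a symmetry of the
   cuspidal cubic n^3 = l m^2, and is the third point where the tangent line
   at (l, m, n) meets it. *)
Lemma eckardt_plane_n0 l m n r : eckardt_point Y (plane_pt l m n r) -> n = 0.
Proof.
move=> hE; have on_p := eckardt_plane_on_Y hE.
have := eckardt_plane_polar (l' := -8 * l) (m' := m) (n' := -2 * n) hE.
have -> : (-2 * n) ^+ 3 = -8 * l * m ^+ 2.
  by transitivity (-8 * n ^+ 3); [ring | rewrite on_p; ring].
have -> : 3 * n ^+ 2 * (-2 * n) = -8 * l * m ^+ 2 + 2 * l * m * m.
  by transitivity (-6 * n ^+ 3); [ring | rewrite on_p; ring].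
move=> /(_ erefl erefl) polar.
have : 27 * n ^+ 3 = 0.
  transitivity (3 * n * (-2 * n) ^+ 2 - (2 * (-8 * l) * m * m + l * m ^+ 2)
                + 15 * (n ^+ 3 - l * m ^+ 2)); first by ring.
  by rewrite polar on_p !subrr mulr0 addr0.
by move/eqP; rewrite mulf_eq0 ((pcharf0P K).1 charK) expf_eq0 /= => /eqP.
Qed.

Lemma eckardt_plane_l0 l n r : eckardt_point Y (plane_pt l 0 n r) -> l = 0.
Proof.
move=> hE; have := eckardt_plane_polar (l' := 0) (m' := 1) (n' := 0) hE.
rewrite !(expr0n, expr1n, mulr0, mul0r, mulr1, addr0, add0r) /=.
by move=> /(_ erefl erefl).
Qed.

Lemma c_neq0 : c != 0.
Proof.
apply/eqP => c0; have d_nz : d != 0.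
  by apply: contraNneq det => ->; rewrite c0 !mulr0 subrr.
have := Fline 0 1; rewrite c0 !mul0r !mul1r !add0r.
have -> : F.@[vec4 0 0 0 d] = F.@[fun i => d * vec4 0 0 0 1 i].
  by apply: meval_eq => i; rewrite /vec4; do !case: ifP => _; ring.
by rewrite (meval_homogZ _ _ homF) => /eqP; rewrite mulf_eq0 expf_eq0 (negbTE d_nz) (negbTE F_e3).
Qed.

Lemma eckardt_off_plane m r wk w3 : eckardt_point Y (plane_pt 0 m 0 r) ->
  (restrict_to_line F (vec4 0 0 (m * c) (m * d)) (vec4 0 1 wk w3))`_1 = - (r * (m * c)) ->
  m * c = 0 /\
  (restrict_to_line F (vec4 0 0 (m * c) (m * d)) (vec4 0 1 wk w3))`_2 + r * wk = 0.
Proof.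
set R := restrict_to_line _ _ _ => hE R1.
have R0 : R`_0 = 0.
  by rewrite coef0_restrict_to_line; have := Fline 0 m; rewrite !mul0r !add0r.
have R3 : R`_3 = F.@[vec4 0 1 wk w3] := coef_restrict_to_line_homog charK _ _ homF.
have FR s : F.@[vec4 0 s (m * c + wk * s) (m * d + w3 * s)] =
    R`_1 * s + R`_2 * s ^+ 2 + R`_3 * s ^+ 3.
  have -> : F.@[vec4 0 s (m * c + wk * s) (m * d + w3 * s)] = R.[s].
    rewrite horner_restrict_to_line; apply: meval_eq => i.
    by rewrite vec4_line; congr (vec4 _ _ _ _ _); ring.
  rewrite (horner_coef_wide _ (size_restrict_to_line _ _ homF)).
  by rewrite !big_ord_recr big_ord0 /= R0; ring.
have polar x5 : R`_2 + r * wk + x5 * (m * c) = 0.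
  have [x4 x4E] : exists x4 : K, x4 ^+ 3 = R`_3 + x5 * wk.
    have [x4 x4E] := @solve_monicpoly K 3 (fun i => if i == 0%N then R`_3 + x5 * wk else 0) isT.
    by exists x4; rewrite x4E !big_ord_recr big_ord0 /=; ring.
  pose x := pt6 0 1 wk w3 x4 x5.
  have Yx : Y.@[x] = 0 by rewrite Yeq_pt6 x4E R3; ring.
  have c3_0 : x4 ^+ 3 - R`_3 - x5 * wk = 0 by rewrite x4E; ring.
  suff : - (R`_2 + r * wk + x5 * (m * c)) + (x4 ^+ 3 - R`_3 - x5 * wk) = 0.
    by rewrite c3_0 addr0 => /eqP; rewrite oppr_eq0 => /eqP.
  apply: (@eckardt_line_coef _ charK _ _ _ x 0 (- R`_1 - r * (m * c)) _ _ hE Yx) => [s|].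
    have -> : Y.@[fun i => plane_pt 0 m 0 r i + x i * s] =
        Y.@[pt6 0 s (m * c + wk * s) (m * d + w3 * s) (x4 * s) (r + x5 * s)].
      by apply: meval_eq => i; rewrite pt6_line; congr (pt6 _ _ _ _ _ _ _); ring.
    by rewrite Yeq_pt6 FR; ring.
  by rewrite R1; ring.
have p0 := polar 0; have p1 := polar 1.
rewrite mul0r addr0 in p0; rewrite mul1r p0 add0r in p1.
by split.
Qed.

Lemma not_eckardt_vertex r : ~ eckardt_point Y (plane_pt 0 0 0 r).
Proof.
move=> hE; have [nz_p _ _] := hE; have := eckardt_off_plane (wk := 1) (w3 := 0) hE.
set R := restrict_to_line _ _ _.
have -> : R = F.@[vec4 0 1 1 0] *: 'X^3.
  apply: (poly_eq_on_nonzero charK) => s _.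
  rewrite horner_restrict_to_line hornerZ hornerXn [RHS]mulrC -(meval_homogZ _ _ homF).
  by apply: meval_eq => i; rewrite /vec4; do !case: ifP => _; ring.
rewrite !coefZ !coefXn /= !(mulr0, mul0r) oppr0 mulr1 add0r => /(_ erefl) [_ r0].
by case: nz_p => i; rewrite /plane_pt r0 /pt6; do !case: ifP => _; rewrite ?mul0r ?addr0 ?eqxx.
Qed.

Lemma eckardt_plane_m0 m r : eckardt_point Y (plane_pt 0 m 0 r) -> m = 0.
Proof.
move=> hE; apply/eqP; apply: contraT => nz_m.
set p := vec4 0 0 (m * c) (m * d).
set Dj := (restrict_to_line F p (vec4 0 1 0 0))`_1.
have Dq : (restrict_to_line F p (vec4 0 0 a b))`_1 = m ^+ 2.
  have -> : restrict_to_line F p (vec4 0 0 a b) = (m ^+ 2)%:P * 'X.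
    apply: (poly_eq_on_nonzero charK) => s _.
    rewrite horner_restrict_to_line hornerCM hornerX [RHS]mulrC -Fline.
    by apply: meval_eq => i; rewrite vec4_line; congr (vec4 _ _ _ _ _); ring.
  by rewrite coefCM coefX mulr1.
pose kappa := - (Dj + r * (m * c)) / m ^+ 2.
have tangent : 1 * Dj + kappa * m ^+ 2 = - (r * (m * c)) by rewrite /kappa; field.
have w_split : vec4 0 1 (kappa * a) (kappa * b) =1
    lincomb 1 (vec4 0 1 0 0) kappa (vec4 0 0 a b).
  by move=> i; rewrite vec4_lincomb; congr (vec4 _ _ _ _ _); ring.
have := eckardt_off_plane (wk := kappa * a) (w3 := kappa * b) hE.
rewrite (eq_restrict_to_line charK F (frefl _) w_split) coef1_restrict_to_line_lincomb -/Dj Dq.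
case/(_ tangent) => /eqP + _.
by rewrite mulf_eq0 (negbTE nz_m) (negbTE c_neq0).
Qed.

Lemma not_eckardt_plane p : p (inord 0) = 0 -> p (inord j) = 0 -> ~ eckardt_point Y p.
Proof.
move=> p0 pj hE; have [l [m [n [r /eq_eckardt_point/(_ hE) {}hE]]]] := plane_pt_coords p0 pj.
have n0 := eckardt_plane_n0 hE; subst n.
have l0 : l = 0.
  have [m0|nz_m] := eqVneq m 0; first by subst m; exact: eckardt_plane_l0 hE.
  have := eckardt_plane_on_Y hE; rewrite expr0n /= => /esym/eqP.
  by rewrite mulf_eq0 expf_eq0 /= (negbTE nz_m) orbF => /eqP.
subst l; have m0 := eckardt_plane_m0 hE; subst m.
exact: not_eckardt_vertex hE.
Qed.

End PlaneCoordinates.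

Lemma not_eckardt_x0_xj p : F \is 3.-homog -> F.@[e4 K 3] != 0 ->
  tangent_mult2 F (e4 K k) (e4 K 3) ->
  p (inord 0) = 0 -> p (inord j) = 0 -> ~ eckardt_point (Yeq F t) p.
Proof.
move=> homF; rewrite (meval_eq _ e4_3) => F_e3.
case/(tangent_line_coords homF) => [a [b [c [d [det Fline]]]]].
exact: (not_eckardt_plane homF F_e3 det Fline).
Qed.

End CubicFourfold.

Lemma coneC_coords (K : fieldType) (F : {mpoly K[4]}) i p : (i < 5)%N ->
  coneC F i p -> p (inord 0) = 0 /\ p (inord i) = 0.
Proof.
move=> lt_i5 [_ [a [b [c [[_ c0 ci _ _] ->]]]]]; rewrite /lincomb /e6 /evec c0 ci.
have ne5 l : (l < 5)%N -> (inord l == inord 5 :> 'I_6) = false.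
  by move=> lt_l5; rewrite -val_eqE /= !inordK ?ltn_eqF // (ltn_trans lt_l5).
by rewrite !ne5 // !mulr0 addr0.
Qed.

Theorem lemma5p9 (K : closedFieldType) (hK : [pchar K] =i pred0)
    (F : {mpoly K[4]}) (t : K) :
  in_U0 F -> t != 0 ->
  smooth_hypersurface (Yeq F t) -> ~ contains_plane (Yeq F t) ->
  forall p : 'I_6 -> K, coneC F 1 p \/ coneC F 2 p ->
  ~ eckardt_point (Yeq F t) p.
Proof.
move=> [homF _ F_e3 tangent2 tangent1] _ _ _ p [] /coneC_coords [] // p0 pj.
- exact: (@not_eckardt_x0_xj K F t 1 2 (or_introl (conj erefl erefl)) hK p
    homF F_e3 tangent2 p0 pj).
- exact: (@not_eckardt_x0_xj K F t 2 1 (or_intror (conj erefl erefl)) hK p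
    homF F_e3 tangent1 p0 pj).
Qed.
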